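(* Let $A=(a_{ij})_{i,j\in I}$ be a generalized Cartan matrix and $U=(u_{ij})_{i,j\in I}$ a complex matrix satisfying: (0) $u_{jj}=0$ for all $j$; (1) $u_{ij}=u_{ji}=0$ if $a_{ij}=a_{ji}=0$; (2) $u_{ij}=-k\,u_{ji}$ if $(a_{ij},a_{ji})=(-k,-1)$ with $k\in\{1,2,3\}$. Let $\mathbb{C}(\alpha;f;\tau)$ be the field of rational functions in independent variables $\alpha_j,f_j,\tau_j$ ($j\in I$). For each $i\in I$ let $s_i$ be the $\mathbb{C}$-automorphism of $\mathbb{C}(\alpha;f;\tau)$ given by $$s_i(\alpha_j)=\alpha_j-a_{ij}\alpha_i,\quad s_i(f_j)=f_j+\frac{\alpha_i}{f_i}u_{ij},\quad s_i(\tau_j)=\tau_j\ (j\neq i),\quad s_i(\tau_i)=f_i\,\tau_i\prod_{k\in I}\tau_k^{-a_{ki}}=f_i\,\frac{\prod_{k\in I\setminus\{i\}}\tau_k^{|a_{ki}|}}{\tau_i}.$$ Then these automorphisms define a representation of the Coxeter group $W(A)$ on $\mathbb{C}(\alpha;f;\tau)$, i.e. $s_i^2=\mathrm{id}$ and $(s_is_j)^{m_{ij}}=\mathrm{id}$ for $i\neq j$ with $m_{ij}<\infty$.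
   Context: A generalized Cartan matrix $A=(a_{ij})_{i,j\in I}$ ($I$ finite) is an integer matrix with $a_{jj}=2$, $a_{ij}\le 0$ for $i\ne j$, and $a_{ij}=0\iff a_{ji}=0$. The Coxeter group $W(A)$ is generated by $s_i$ ($i\in I$) with relations $s_i^2=1$ and $(s_is_j)^{m_{ij}}=1$ for $i\neq j$, where $m_{ij}=2,3,4,6,\infty$ according as $a_{ij}a_{ji}=0,1,2,3,\ge4$ (no relation when $m_{ij}=\infty$). *)

From HB Require Import structures.
From mathcomp Require Import all_boot all_order all_algebra.
From mathcomp Require Import generic_quotient fraction.
From mathcomp Require Import mpoly.
From mathcomp Require Import complex.
From mathcomp Require Import Rstruct.

Set Implicit Arguments.
Unset Strict Implicit.
Unset Printing Implicit Defensive.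

Import Order.TTheory GRing.Theory Num.Theory.
Local Open Scope ring_scope.

Notation CC := (complex Rdefinitions.R).
Definition P (n : nat) := {mpoly CC[n + n + n]}.
Definition FF (n : nat) := {fraction (P n)}.

Notation tofrac := (@FracField.tofrac _).

Definition is_GCM (n : nat) (A : 'M[int]_n) : Prop :=
  (forall j, A j j = 2) /\
  (forall i j, i != j -> A i j <= 0) /\
  (forall i j, A i j = 0 <-> A j i = 0).

(* m_ij as a function of a_ij a_ji : 2,3,4,6 for 0,1,2,3, and infinity (None) otherwise. *)
Definition cox_m (a : int) : option nat :=
  if a == 0 then Some 2%N
  else if a == 1 then Some 3%N
  else if a == 2 then Some 4%N
  else if a == 3 then Some 6%N
  else None.

Definition valpha n (j : 'I_n) : 'I_(n + n + n) := lshift n (lshift n j).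
Definition vf     n (j : 'I_n) : 'I_(n + n + n) := lshift n (rshift n j).
Definition vtau   n (j : 'I_n) : 'I_(n + n + n) := rshift (n + n) j.

Definition Xalpha n (j : 'I_n) : FF n := tofrac ('X_(valpha j) : P n).
Definition Xf     n (j : 'I_n) : FF n := tofrac ('X_(vf j) : P n).
Definition Xtau   n (j : 'I_n) : FF n := tofrac ('X_(vtau j) : P n).

Definition cst n (c : CC) : FF n := tofrac (c%:MP : P n).

Definition s_img n (A : 'M[int]_n) (U : 'M[CC]_n) (i : 'I_n)
    (v : 'I_(n + n + n)) : FF n :=
  match split v with
  | inl w =>
      match split w with
      | inl j => Xalpha j - (A i j)%:~R * Xalpha i
      | inr j => Xf j + Xalpha i / Xf i * cst n (U i j)
      end
  | inr j =>
      if j == i then Xf i * Xtau i * \prod_(k < n) Xtau k ^ (- A k i)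
      else Xtau j
  end.

Definition s_poly n (A : 'M[int]_n) (U : 'M[CC]_n) (i : 'I_n) (p : P n) : FF n :=
  mmap (fun c : CC => cst n c) (s_img A U i) p.

Definition s_act n (A : 'M[int]_n) (U : 'M[CC]_n) (i : 'I_n) (x : FF n) : FF n :=
  let r := repr x in s_poly A U i (\n_r) / s_poly A U i (\d_r).

(* Each s_i is first defined on polynomials. There it is injective: after
   clearing the denominators f_i and tau_i, s_i is its own inverse up to powers
   of s_i(f_i tau_i). Hence it extends to an endomorphism of C(alpha; f; tau),
   and such C-algebra endomorphisms are determined by the images of the
   generators, on which all relations are checked. s_i^2 = id is a direct
   computation. For (s_i s_j)^m, the orbit of a generator alpha_k, f_k, tau_i
   or tau_j only involves ten quantities (alpha_i, alpha_j, f_i, f_j, tau_i,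
   tau_j, two products of the other taus, alpha_k, f_k), while the other taus
   are fixed; on these the relation is an identity of rational functions,
   verified for the types A1xA1, A2, B2 and G2 with |a_ij| >= |a_ji|. The other
   orientation follows from (s_i s_j)^m = s_i (s_j s_i)^m s_i. *)

From HB Require Import structures.
From mathcomp Require Import all_boot all_order all_algebra.
From mathcomp Require Import generic_quotient fraction mpoly complex Rstruct.
From mathcomp Require Import ring zify.
Import Order.TTheory GRing.Theory Num.Theory.
Local Open Scope ring_scope.
Set Implicit Arguments.
Unset Strict Implicit.

Lemma mpoly_gen_ind (k : nat) (R : nzRingType) (Q : {mpoly R[k]} -> Prop) :
  (forall c, Q c%:MP) -> (forall i, Q 'X_i) ->
  (forall p q, Q p -> Q q -> Q (p + q)) -> (forall p q, Q p -> Q q -> Q (p * q)) ->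
  forall p, Q p.
Proof.
move=> hC hX hD hM; elim/mpolyind => [|c m p _ _ hp]; first by rewrite -mpolyC0.
apply: (hD) => //; rewrite -mul_mpolyC; apply: (hM) => //.
rewrite mpolyXE_id; apply: (big_ind Q) => //; first by rewrite -mpolyC1.
move=> i _; move: (m i) => e; elim: e => [|e he]; first by rewrite expr0 -mpolyC1.
by rewrite exprS; apply: (hM).
Qed.

Lemma mpoly_rmorph_eq (k : nat) (R : nzRingType) (S : pzRingType)
    (f1 f2 : {rmorphism {mpoly R[k]} -> S}) :
  (forall c, f1 c%:MP = f2 c%:MP) -> (forall i, f1 'X_i = f2 'X_i) -> f1 =1 f2.
Proof.
move=> hC hX; elim/mpoly_gen_ind => // p q hp hq; first by rewrite !rmorphD hp hq.
by rewrite !rmorphM hp hq.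
Qed.

Section FractionField.
Variable R : idomainType.
Local Notation tofrac := (@FracField.tofrac R).

Lemma tofrac_inj : injective tofrac.
Proof. by move=> a b /eqP; rewrite tofrac_eq => /eqP. Qed.

Lemma frac_numdenE (x : {fraction R}) :
  x = tofrac (\n_(repr x)) / tofrac (\d_(repr x)).
Proof.
have dx0 : tofrac (\d_(repr x)) != 0 by rewrite tofrac_eq0 denom_ratioP.
apply: (canRL (mulfK dx0)); rewrite mulrC -[x in _ * x]reprK.
unlock tofrac; rewrite /= -[_ * _]/(FracField.mul _ _) -FracField.pi_mul.
apply/eqP; rewrite /FracField.mulf FracField.equivf_def.
by rewrite !numden_Ratio ?mulr1 ?mul1r ?oner_neq0 ?denom_ratioP.
Qed.

Lemma fracP (x : {fraction R}) : exists a b, b != 0 /\ x = tofrac a / tofrac b.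
Proof. by exists (\n_(repr x)), (\d_(repr x)); rewrite denom_ratioP -frac_numdenE. Qed.
End FractionField.

Definition cstC n : {rmorphism CC -> FF n} :=
  @FracField.tofrac (P n) \o @mpolyC (n + n + n) CC.
Notation peval g := (mmap (cstC _) g).
Definition Xvar n (v : 'I_(n + n + n)) : FF n := tofrac 'X_v.

Section PolyEval.
Variable n : nat.
Local Notation FFn := (FF n).
Local Notation V := 'I_(n + n + n).
Implicit Types (g : V -> FFn) (p : P n).

Lemma pevalC g c : peval g c%:MP = cst n c.
Proof. exact: mmapC. Qed.

Lemma pevalX g v : peval g 'X_v = g v.
Proof. by rewrite mmapX mmap1U. Qed.

Lemma eq_peval g1 g2 : g1 =1 g2 -> peval g1 =1 peval g2.
Proof. by move=> e p; rewrite /mmap; apply: eq_bigr => m _; rewrite (mmap1_eq _ e). Qed.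

Lemma Xvar_neq0 v : Xvar v != 0 :> FFn.
Proof.
rewrite tofrac_eq0; apply/eqP => /(congr1 (mcoeff (mnm1 v))).
by rewrite mcoeffX mcoeff0 eqxx => /eqP; rewrite oner_eq0.
Qed.

Lemma cst0 : cst n 0 = 0.
Proof. exact: (rmorph0 (cstC n)). Qed.
End PolyEval.

Record cmorph n (s : FF n -> FF n) : Prop := CMorph {
  cmorph_nmod : nmod_morphism s;
  cmorph_monoid : monoid_morphism s;
  cmorph_cst : forall c, s (cst n c) = cst n c }.

Definition cmorph_rmorph n (s : FF n -> FF n) (hs : cmorph s) : {rmorphism FF n -> FF n} :=
  HB.pack s (GRing.isNmodMorphism.Build _ _ s (cmorph_nmod hs))
            (GRing.isMonoidMorphism.Build _ _ s (cmorph_monoid hs)).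

Section CMorph.
Variable n : nat.
Local Notation FFn := (FF n).
Implicit Types (s : FFn -> FFn).

Lemma cmorph_id : cmorph (@id FFn).
Proof. by split. Qed.

Lemma cmorph_comp s1 s2 : cmorph s1 -> cmorph s2 -> cmorph (s1 \o s2).
Proof.
move=> h1 h2; pose r := cmorph_rmorph h1 \o cmorph_rmorph h2.
split; [exact: (conj (rmorph0 r) (rmorphD r)) | exact: (rmorph1 r, rmorphM r) |].
by move=> c /=; rewrite !cmorph_cst.
Qed.

Lemma cmorph_iter s m : cmorph s -> cmorph (iter m s).
Proof.
by move=> hs; elim: m => [|m ih]; [exact: cmorph_id | exact: (cmorph_comp hs ih)].
Qed.

Lemma cmorph_tofrac s (hs : cmorph s) p : s (tofrac p) = peval (s \o @Xvar n) p.
Proof.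
move: p; apply: (@mpoly_rmorph_eq _ _ _ (cmorph_rmorph hs \o @FracField.tofrac (P n))) => [c|v] /=.
  by rewrite pevalC -(cmorph_cst hs).
by rewrite pevalX.
Qed.

Lemma cmorph_ext s1 s2 : cmorph s1 -> cmorph s2 ->
  (forall v, s1 (Xvar v) = s2 (Xvar v)) -> s1 =1 s2.
Proof.
move=> h1 h2 e x; have [a [b [_ ->]]] := fracP x.
rewrite -[s1 _]/(cmorph_rmorph h1 _) -[s2 _]/(cmorph_rmorph h2 _) !rmorphM !fmorphV /=.
by rewrite !cmorph_tofrac // !(eq_peval (g1 := s1 \o _) e).
Qed.

Lemma cmorph_neq0 s x : cmorph s -> x != 0 -> s x != 0.
Proof. by move=> hs; rewrite (fmorph_eq0 (cmorph_rmorph hs)). Qed.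
End CMorph.

Definition frac_ext n (g : 'I_(n + n + n) -> FF n) (x : FF n) : FF n :=
  peval g (\n_(repr x)) / peval g (\d_(repr x)).

Section FracExt.
Variable n : nat.
Local Notation FFn := (FF n).
Local Notation tofrac := (@FracField.tofrac (P n)).
Variable g : 'I_(n + n + n) -> FFn.
Hypothesis peval_g_neq0 : forall p, p != 0 -> peval g p != 0.

Lemma frac_ext_frac a b : b != 0 -> frac_ext g (tofrac a / tofrac b) = peval g a / peval g b.
Proof.
move=> b0; rewrite /frac_ext; have d0 := denom_ratioP (repr (tofrac a / tofrac b)).
move/eqP: (frac_numdenE (tofrac a / tofrac b)).
rewrite eqr_div ?tofrac_eq0 // -!rmorphM /= tofrac_eq => /eqP e.
by apply/eqP; rewrite eqr_div ?peval_g_neq0 // -!rmorphM /= e.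
Qed.

Lemma frac_ext_tofrac a : frac_ext g (tofrac a) = peval g a.
Proof. by rewrite -[tofrac a]divr1 -tofrac1 frac_ext_frac ?oner_neq0 // rmorph1 divr1. Qed.

Lemma cmorph_frac_ext : cmorph (frac_ext g).
Proof.
have tf0 b : b != 0 -> tofrac b != 0 by rewrite tofrac_eq0.
split.
- split; first by rewrite -tofrac0 frac_ext_tofrac rmorph0.
  move=> x y; have [a1 [b1 [h1 ->]]] := fracP x; have [a2 [b2 [h2 ->]]] := fracP y.
  rewrite addf_div ?tf0 // -!rmorphM -!rmorphD /= !frac_ext_frac ?mulf_neq0 //.
  by rewrite addf_div ?peval_g_neq0 // !rmorphD !rmorphM.
- split; first by rewrite -tofrac1 frac_ext_tofrac rmorph1.
  move=> x y; have [a1 [b1 [h1 ->]]] := fracP x; have [a2 [b2 [h2 ->]]] := fracP y.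
  rewrite mulf_div -!rmorphM /= !frac_ext_frac ?mulf_neq0 //.
  by rewrite mulf_div !rmorphM.
- by move=> c; rewrite frac_ext_tofrac pevalC.
Qed.
End FracExt.

(* The substitution [v |-> q] given by [inverse_gen] inverts [peval g] up to
   powers of [peval g e], which forces [peval g] to be injective. *)
Section InverseUpToUnit.
Variable n : nat.
Local Notation tofrac := (@FracField.tofrac (P n)).
Variables (g : 'I_(n + n + n) -> FF n) (e : P n).
Hypothesis e_neq0 : peval g e != 0.
Hypothesis inverse_gen : forall v, exists m q,
  g v * tofrac e ^+ m = tofrac q /\ peval g q = peval g e ^+ m * Xvar v.

Lemma peval_inverse p : exists m q,
  peval g p * tofrac e ^+ m = tofrac q /\ peval g q = peval g e ^+ m * tofrac p.
Proof.
elim/mpoly_gen_ind: p => [c|v|p1 p2 [m1 [q1 [h1 k1]]] [m2 [q2 [h2 k2]]]|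
                            p1 p2 [m1 [q1 [h1 k1]]] [m2 [q2 [h2 k2]]]].
- by exists 0%N, c%:MP; rewrite !pevalC mulr1 mul1r.
- by rewrite pevalX; exact: inverse_gen.
- exists (m1 + m2)%N, (q1 * e ^+ m2 + q2 * e ^+ m1).
  rewrite !rmorphD !rmorphM !rmorphXn /= -h1 -h2 k1 k2 !exprD.
  by split; ring.
- exists (m1 + m2)%N, (q1 * q2).
  rewrite !rmorphM /= -h1 -h2 k1 k2 !exprD.
  by split; ring.
Qed.

Lemma peval_neq0 p : p != 0 -> peval g p != 0.
Proof.
move=> p0; have [m [q [h1 h2]]] := peval_inverse p.
have ep0 : peval g e ^+ m * tofrac p != 0 by rewrite mulf_neq0 ?expf_neq0 ?tofrac_eq0.
apply: contra_neq ep0 => gp0; rewrite -h2 (_ : q = 0) ?rmorph0 //.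
by apply: tofrac_inj; rewrite -h1 gp0 mul0r rmorph0.
Qed.
End InverseUpToUnit.

(** * The automorphisms s_i *)

(* The image of the generator [v] under [s_i], with the generators of the
   target evaluated at [Y]: [s_img A U i = s_gen A U i Xvar], and any
   morphism [s] satisfies [s (s_gen Y v) = s_gen (s \o Y) v]. *)
Definition s_gen n (A : 'M[int]_n) (U : 'M[CC]_n) (i : 'I_n)
    (Y : 'I_(n + n + n) -> FF n) (v : 'I_(n + n + n)) : FF n :=
  match split v with
  | inl w =>
      match split w with
      | inl j => Y (valpha j) - (A i j)%:~R * Y (valpha i)
      | inr j => Y (vf j) + Y (valpha i) / Y (vf i) * cst n (U i j)
      end
  | inr j =>
      if j == i then Y (vf i) * Y (vtau i) * \prod_(k < n) Y (vtau k) ^ (- A k i)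
      else Y (vtau j)
  end.

Section Generators.
Variables (n : nat) (A : 'M[int]_n) (U : 'M[CC]_n).
Local Notation FFn := (FF n).
Local Notation V := 'I_(n + n + n).
Implicit Types (i j : 'I_n) (Y : V -> FFn).

Lemma s_imgE i v : s_img A U i v = s_gen A U i (@Xvar n) v.
Proof. by []. Qed.

Lemma var_ind (Q : V -> Prop) :
  (forall j, Q (valpha j)) -> (forall j, Q (vf j)) -> (forall j, Q (vtau j)) -> forall v, Q v.
Proof.
move=> ha hf ht v; rewrite -(splitK v); case: (split v) => [w|j] /=; last exact: ht.
by rewrite -(splitK w); case: (split w) => [j|j] /=; [exact: ha | exact: hf].
Qed.

Lemma s_gen_alpha i Y j :
  s_gen A U i Y (valpha j) = Y (valpha j) - (A i j)%:~R * Y (valpha i).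
Proof. by rewrite /s_gen !(unsplitK (inl _)). Qed.

Lemma s_gen_f i Y j :
  s_gen A U i Y (vf j) = Y (vf j) + Y (valpha i) / Y (vf i) * cst n (U i j).
Proof. by rewrite /s_gen (unsplitK (inl _)) (unsplitK (inr _)). Qed.

Lemma s_gen_tau i Y j : s_gen A U i Y (vtau j) =
  if j == i then Y (vf i) * Y (vtau i) * \prod_(k < n) Y (vtau k) ^ (- A k i) else Y (vtau j).
Proof. by rewrite /s_gen (unsplitK (inr _)). Qed.

Lemma eq_s_gen i Y1 Y2 : Y1 =1 Y2 -> s_gen A U i Y1 =1 s_gen A U i Y2.
Proof.
move=> e; elim/var_ind => j; first by rewrite !s_gen_alpha !e.
  by rewrite !s_gen_f !e.
rewrite !s_gen_tau; case: eqP => _; last exact: e.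
by rewrite !e; congr (_ * _); apply: eq_bigr => k _; rewrite e.
Qed.

Lemma cmorph_s_gen s : cmorph s -> forall i Y v, s (s_gen A U i Y v) = s_gen A U i (s \o Y) v.
Proof.
move=> hs i Y v; rewrite -[s _]/(cmorph_rmorph hs _).
elim/var_ind: v => j; rewrite ?s_gen_alpha ?s_gen_f ?s_gen_tau.
- by rewrite rmorphB rmorphM rmorph_int.
- by rewrite rmorphD !rmorphM fmorphV /= cmorph_cst.
- case: eqP => // _; rewrite !rmorphM rmorph_prod; congr (_ * _).
  by apply: eq_bigr => k _; rewrite fmorphXz.
Qed.

Hypothesis A_diag : forall i, A i i = 2.
Hypothesis A_offdiag : forall i j, i != j -> A i j <= 0.

Lemma prod_tau_exp (Y : 'I_n -> FFn) i :
  \prod_(k < n) Y k ^ (- A k i) = (Y i ^+ 2)^-1 * \prod_(k < n | k != i) Y k ^+ `|A k i|%N.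
Proof.
rewrite (bigD1 i) //= A_diag; congr (_ * _); apply: eq_bigr => k hk.
by rewrite exprnP -abszN gez0_abs // oppr_ge0 A_offdiag.
Qed.
End Generators.

Lemma mul_invsqr (F : fieldType) (t : F) : t * (t ^+ 2)^-1 = t^-1.
Proof.
have [->|t0] := eqVneq t 0; first by rewrite !(invr0, mul0r).
by rewrite expr2 invfM mulrA mulfV ?mul1r.
Qed.

Lemma divf_mulK (F : fieldType) (x y t : F) : t != 0 -> x / t * (y * t) = x * y.
Proof. by move=> t0; rewrite mulrA mulrAC divfK. Qed.

Lemma add_div_mulK (F : fieldType) (x a c f : F) : f != 0 -> (x + a / f * c) * f = x * f + a * c.
Proof. by move=> f0; rewrite mulrDl mulrAC divfK. Qed.

Section SMorphism.
Variables (n : nat) (A : 'M[int]_n) (U : 'M[CC]_n).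
Hypothesis A_diag : forall i, A i i = 2.
Hypothesis A_offdiag : forall i j, i != j -> A i j <= 0.
Hypothesis U_diag : forall i, U i i = 0.
Local Notation FFn := (FF n).
Local Notation X := (@Xvar n).
Local Notation tofrac := (@FracField.tofrac (P n)).
Variable i : 'I_n.

Definition tau_rest (Y : 'I_(n + n + n) -> FFn) :=
  \prod_(k < n | k != i) Y (vtau k) ^+ `|A k i|%N.

Lemma tau_rest_neq0 : tau_rest X != 0.
Proof. by apply/prodf_neq0 => k _; rewrite expf_neq0 // Xvar_neq0. Qed.

Lemma s_gen_f_self Y : s_gen A U i Y (vf i) = Y (vf i).
Proof. by rewrite s_gen_f U_diag cst0 mulr0 addr0. Qed.

Lemma s_gen_tau_self Y : s_gen A U i Y (vtau i) = Y (vf i) * tau_rest Y / Y (vtau i).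
Proof.
rewrite s_gen_tau eqxx (prod_tau_exp A_diag A_offdiag (fun k => Y (vtau k))).
by rewrite mulrA -[_ * _ * _^-1]mulrA mul_invsqr mulrAC.
Qed.

Lemma s_gen_tau_other Y j : j != i -> s_gen A U i Y (vtau j) = Y (vtau j).
Proof. by move=> ji; rewrite s_gen_tau (negbTE ji). Qed.

Lemma tau_rest_s_gen Y : tau_rest (s_gen A U i Y) = tau_rest Y.
Proof. by apply: eq_bigr => k ki; rewrite s_gen_tau_other. Qed.

Local Notation g := (s_img A U i).

Definition s_denom : P n := 'X_(vf i) * 'X_(vtau i).

Lemma peval_s_denom : peval g s_denom = X (vf i) * s_gen A U i X (vtau i).
Proof. by rewrite rmorphM /= !pevalX s_imgE s_gen_f_self. Qed.

Lemma peval_s_denom_neq0 : peval g s_denom != 0.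
Proof.
by rewrite peval_s_denom s_gen_tau_self !mulf_neq0 ?invr_neq0 ?Xvar_neq0 ?tau_rest_neq0.
Qed.

(* The only denominators of [s_i] are [f_i] and [tau_i]; clearing them, [s_i]
   is its own inverse up to powers of [s_i (f_i tau_i)]. *)
Lemma s_img_inverse v : exists m q,
  g v * tofrac s_denom ^+ m = tofrac q /\ peval g q = peval g s_denom ^+ m * X v.
Proof.
have Xn0 w : X w != 0 := Xvar_neq0 w.
rewrite peval_s_denom; elim/var_ind: v => j.
- exists 0%N, ('X_(valpha j) - (A i j)%:~R * 'X_(valpha i)); split.
    by rewrite mulr1 rmorphB rmorphM /= rmorph_int s_imgE s_gen_alpha.
  rewrite rmorphB rmorphM /= rmorph_int !pevalX !s_imgE !s_gen_alpha A_diag.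
  by ring.
- exists 1%N, (('X_(vf j) * 'X_(vf i) + 'X_(valpha i) * (U i j)%:MP) * 'X_(vtau i)).
  split; rewrite ?rmorphM ?rmorphD ?rmorphM /= ?pevalX ?pevalC !s_imgE.
    by rewrite s_gen_f expr1 mulrA add_div_mulK.
  rewrite s_gen_f_self s_gen_f s_gen_alpha A_diag add_div_mulK //.
  by ring.
- have [->|ji] := eqVneq j i; last first.
    by exists 0%N, 'X_(vtau j); rewrite !mulr1 mul1r pevalX s_imgE s_gen_tau_other.
  exists 1%N, ('X_(vf i) ^+ 2 * \prod_(k < n | k != i) 'X_(vtau k) ^+ `|A k i|%N).
  have tofrac_rest : tofrac (\prod_(k < n | k != i) 'X_(vtau k) ^+ `|A k i|%N) = tau_rest X.
    by rewrite rmorph_prod; apply: eq_bigr => k _; rewrite rmorphXn.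
  have peval_rest : peval g (\prod_(k < n | k != i) 'X_(vtau k) ^+ `|A k i|%N) = tau_rest X.
    rewrite rmorph_prod; apply: eq_bigr => k ki.
    by rewrite rmorphXn /= pevalX s_imgE s_gen_tau_other.
  split; rewrite !rmorphM /= ?rmorphXn /= ?tofrac_rest ?peval_rest ?pevalX !s_imgE -?/(Xvar _).
    by rewrite s_gen_tau_self expr1 divf_mulK // mulrAC.
  by rewrite s_gen_f_self s_gen_tau_self expr1 -[RHS]mulrA divfK // mulrA.
Qed.

Lemma cmorph_s : cmorph (s_act A U i).
Proof. exact/cmorph_frac_ext/(peval_neq0 peval_s_denom_neq0 s_img_inverse). Qed.

Lemma s_act_Xvar v : s_act A U i (X v) = s_gen A U i X v.
Proof.
by rewrite [LHS](frac_ext_tofrac (peval_neq0 peval_s_denom_neq0 s_img_inverse)) pevalX.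
Qed.

Lemma s_actK : involutive (s_act A U i).
Proof.
apply: (cmorph_ext (cmorph_comp cmorph_s cmorph_s) (cmorph_id n)) => v /=.
rewrite s_act_Xvar (cmorph_s_gen A U cmorph_s).
rewrite (eq_s_gen A U i (Y1 := s_act A U i \o X) s_act_Xvar).
elim/var_ind: v => j.
- by rewrite !s_gen_alpha A_diag; ring.
- by rewrite s_gen_f s_gen_f_self s_gen_f s_gen_alpha A_diag; ring.
- have [->|ji] := eqVneq j i; last by rewrite !s_gen_tau_other.
  rewrite !s_gen_tau_self s_gen_f_self tau_rest_s_gen invf_div mulrC divfK //.
  by rewrite mulf_neq0 ?Xvar_neq0 ?tau_rest_neq0.
Qed.
End SMorphism.

(** * Rank-two computations *)

(* For distinct [i, j] and a third index [k], the state records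
   (alpha_i, alpha_j, f_i, f_j, tau_i, tau_j, c_i, c_j, alpha_k, f_k), where
   c_i is the product of the tau_l^|a_li| over l outside {i, j}; [rhoi] and
   [rhoj] are the actions of s_i and s_j on it. *)
Record state (F : Type) := mkst {
  st_a1 : F; st_a2 : F; st_f1 : F; st_f2 : F; st_t1 : F; st_t2 : F;
  st_c1 : F; st_c2 : F; st_ak : F; st_fk : F }.

Definition nzs (F : fieldType) (s : state F) :=
  st_f1 s != 0 /\ st_f2 s != 0 /\ st_t1 s != 0 /\ st_t2 s != 0 /\ st_c1 s != 0 /\ st_c2 s != 0.

Definition rhoi (F : fieldType) (aij cik uij uik : F) (bji : nat) (s : state F) : state F :=
  let: mkst a1 a2 f1 f2 t1 t2 c1 c2 ak fk := s in
  mkst (- a1) (a2 - aij * a1) f1 (f2 + a1 * uij / f1) (f1 * (t2 ^+ bji * c1) / t1) t2 c1 c2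
    (ak - cik * a1) (fk + a1 * uik / f1).

Definition swap (F : Type) (s : state F) : state F :=
  let: mkst a1 a2 f1 f2 t1 t2 c1 c2 ak fk := s in mkst a2 a1 f2 f1 t2 t1 c2 c1 ak fk.

Definition rhoj (F : fieldType) (aji cjk uji ujk : F) (bij : nat) (s : state F) : state F :=
  swap (rhoi aji cjk uji ujk bij (swap s)).

Lemma nzs_f1f2 (F : fieldType) (s : state F) : nzs s -> st_f1 s * st_f2 s != 0.
Proof. by case=> h1 [h2 _]; rewrite mulf_neq0. Qed.

Ltac solve_nonzero := repeat (apply/andP; split); try done; try assumption.

(* Besides the f's and tau's, the denominators met below are the forms
   [f1 * f2 + p * (x * a1 + y * a2)]; each new one is the product of the two
   f-components of a state along the orbit, hence nonzero. *)
Ltac nz_linear nz e :=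
  let h := fresh in
  have h := nzs_f1f2 nz; rewrite e /= in h;
  match type of h with is_true (?x != 0) =>
  match goal with |- is_true (?y != 0) =>
    have <- : x = y by field; solve_nonzero end end; exact: h.

Ltac unfold_locals := repeat match goal with x := _ |- _ => unfold x end.

Ltac rhoi_step e :=
  rewrite e; unfold_locals; rewrite /rhoi /=; congr mkst; field; solve_nonzero.
Ltac rhoj_step P e :=
  rewrite iterS /P e; unfold_locals; rewrite /rhoj /rhoi /=; congr mkst; field; solve_nonzero.

(* In C(alpha; f; tau) the states along the orbit are images of generators
   under automorphisms, so the nonvanishing hypotheses hold; they supply the
   nonzero denominators needed by [field]. *)
Lemma braid_A1xA1 (F : fieldType) (aij aji uij uji cik cjk uik ujk : F) (s0 : state F) :
  aij = 0 -> aji = 0 -> uij = 0 -> uji = 0 ->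
  let ri := rhoi aij cik uij uik 0 in
  let rj := rhoj aji cjk uji ujk 0 in
  let P s := rj (ri s) in
  (forall N, (N < 2)%N -> nzs (iter N P s0) /\ nzs (ri (iter N P s0))) ->
  iter 2 P s0 = s0.
Proof.
move=> -> -> -> -> ri rj P; case: s0 => a1 a2 f1 f2 t1 t2 ci cj ak fk H.
have [[nf1 [nf2 [nt1 [nt2 [nci ncj]]]]] _] := H 0%N erefl.
rewrite /= in nf1 nf2 nt1 nt2 nci ncj; set s0 := mkst a1 a2 f1 f2 t1 t2 ci cj ak fk.
have e1 : ri s0 =
  mkst (- a1) a2
    f1
    f2
    (f1 * ci / t1)
    t2
    ci cj
    (ak - cik * a1)
    (fk + a1 * uik / f1).
  by unfold_locals; rewrite /rhoi /=; congr mkst; field; solve_nonzero.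
have e2 : iter 1 P s0 =
  mkst (- a1) (- a2)
    f1
    f2
    (f1 * ci / t1)
    (f2 * cj / t2)
    ci cj
    (ak - cik * a1 - cjk * a2)
    (fk + a1 * uik / f1 + a2 * ujk / f2).
  by rhoj_step P e1.
have e3 : ri (iter 1 P s0) =
  mkst a1 (- a2)
    f1
    f2
    t1
    (f2 * cj / t2)
    ci cj
    (ak - cjk * a2)
    (fk + a1 * uik / f1 + a2 * ujk / f2 + (- a1) * uik / f1).
  by rhoi_step e2.
by rhoj_step P e3.
Qed.

Lemma braid_A2 (F : fieldType) (aij aji p cik cjk uij uik ujk : F) (s0 : state F) :
  aij = - 1 -> aji = - 1 -> uij = - p ->
  let ri := rhoi aij cik uij uik 1 in
  let rj := rhoj aji cjk p ujk 1 in
  let P s := rj (ri s) in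
  (forall N, (N < 3)%N -> nzs (iter N P s0) /\ nzs (ri (iter N P s0))) ->
  iter 3 P s0 = s0.
Proof.
move=> -> -> -> ri rj P; case: s0 => a1 a2 f1 f2 t1 t2 ci cj ak fk H.
have [[nf1 [nf2 [nt1 [nt2 [nci ncj]]]]] _] := H 0%N erefl.
rewrite /= in nf1 nf2 nt1 nt2 nci ncj; set s0 := mkst a1 a2 f1 f2 t1 t2 ci cj ak fk.
have e1 : ri s0 =
  mkst (- a1) (a1 + a2)
    f1
    ((f1 * f2 + p * (- a1)) / f1)
    (f1 * t2 * ci / t1)
    t2
    ci cj
    (ak - cik * a1)
    (fk + a1 * uik / f1).
  by unfold_locals; rewrite /rhoi /=; congr mkst; field; solve_nonzero.
have q1 : (f1 * f2 + p * (- a1)) != 0 by nz_linear (H 0%N erefl).2 e1.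
have e2 : iter 1 P s0 =
  mkst a2 (- a1 - a2)
    (f1 * (f1 * f2 + p * a2) / (f1 * f2 + p * (- a1)))
    ((f1 * f2 + p * (- a1)) / f1)
    (f1 * t2 * ci / t1)
    (ci * cj * (f1 * f2 + p * (- a1)) / t1)
    ci cj
    (ak - cik * a1 - cjk * (a1 + a2))
    (fk + a1 * uik / f1 + (a1 + a2) * ujk / ((f1 * f2 + p * (- a1)) / f1)).
  by rhoj_step P e1.
have q2 : (f1 * f2 + p * a2) != 0 by nz_linear (H 1%N erefl).1 e2.
have e3 : ri (iter 1 P s0) =
  mkst (- a2) (- a1)
    (f1 * (f1 * f2 + p * a2) / (f1 * f2 + p * (- a1)))
    (f2 * (f1 * f2 + p * (- a1)) / (f1 * f2 + p * a2))
    (ci * cj * (f1 * f2 + p * a2) / t2)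
    (ci * cj * (f1 * f2 + p * (- a1)) / t1)
    ci cj
    (ak - cik * (a1 + a2) - cjk * (a1 + a2))
    (fk
      + a1 * uik / f1
      + (a1 + a2) * ujk / ((f1 * f2 + p * (- a1)) / f1)
      + a2 * uik / (f1 * (f1 * f2 + p * a2) / (f1 * f2 + p * (- a1)))).
  by rhoi_step e2.
have e4 : iter 2 P s0 =
  mkst (- a1 - a2) a1
    ((f1 * f2 + p * a2) / f2)
    (f2 * (f1 * f2 + p * (- a1)) / (f1 * f2 + p * a2))
    (ci * cj * (f1 * f2 + p * a2) / t2)
    (f2 * t1 * cj / t2)
    ci cj
    (ak - cik * (a1 + a2) - cjk * a2)
    (fk
      + a1 * uik / f1
      + (a1 + a2) * ujk / ((f1 * f2 + p * (- a1)) / f1)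
      + a2 * uik / (f1 * (f1 * f2 + p * a2) / (f1 * f2 + p * (- a1)))
      + (- a1) * ujk / (f2 * (f1 * f2 + p * (- a1)) / (f1 * f2 + p * a2))).
  by rhoj_step P e3.
have e5 : ri (iter 2 P s0) =
  mkst (a1 + a2) (- a2)
    ((f1 * f2 + p * a2) / f2)
    f2
    t1
    (f2 * t1 * cj / t2)
    ci cj
    (ak - cjk * a2)
    (fk
      + a1 * uik / f1
      + (a1 + a2) * ujk / ((f1 * f2 + p * (- a1)) / f1)
      + a2 * uik / (f1 * (f1 * f2 + p * a2) / (f1 * f2 + p * (- a1)))
      + (- a1) * ujk / (f2 * (f1 * f2 + p * (- a1)) / (f1 * f2 + p * a2))
      + (- a1 - a2) * uik / ((f1 * f2 + p * a2) / f2)).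
  by rhoi_step e4.
by rhoj_step P e5.
Qed.

Lemma braid_B2 (F : fieldType) (aij aji p cik cjk uij uik ujk : F) (s0 : state F) :
  aij = - 2 -> aji = - 1 -> uij = - 2 * p ->
  let ri := rhoi aij cik uij uik 1 in
  let rj := rhoj aji cjk p ujk 2 in
  let P s := rj (ri s) in
  (forall N, (N < 4)%N -> nzs (iter N P s0) /\ nzs (ri (iter N P s0))) ->
  iter 4 P s0 = s0.
Proof.
move=> -> -> -> ri rj P; case: s0 => a1 a2 f1 f2 t1 t2 ci cj ak fk H.
have [[nf1 [nf2 [nt1 [nt2 [nci ncj]]]]] _] := H 0%N erefl.
rewrite /= in nf1 nf2 nt1 nt2 nci ncj; set s0 := mkst a1 a2 f1 f2 t1 t2 ci cj ak fk.
have e1 : ri s0 =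
  mkst (- a1) (2 * a1 + a2)
    f1
    ((f1 * f2 + p * (- 2 * a1)) / f1)
    (f1 * t2 * ci / t1)
    t2
    ci cj
    (ak - cik * a1)
    (fk + a1 * uik / f1).
  by unfold_locals; rewrite /rhoi /=; congr mkst; field; solve_nonzero.
have q1 : (f1 * f2 + p * (- 2 * a1)) != 0 by nz_linear (H 0%N erefl).2 e1.
have e2 : iter 1 P s0 =
  mkst (a1 + a2) (- 2 * a1 - a2)
    (f1 * (f1 * f2 + p * a2) / (f1 * f2 + p * (- 2 * a1)))
    ((f1 * f2 + p * (- 2 * a1)) / f1)
    (f1 * t2 * ci / t1)
    (f1 * t2 * ci ^+ 2 * cj * (f1 * f2 + p * (- 2 * a1)) / (t1 ^+ 2))
    ci cj
    (ak - cik * a1 - cjk * (2 * a1 + a2))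
    (fk + a1 * uik / f1 + (2 * a1 + a2) * ujk / ((f1 * f2 + p * (- 2 * a1)) / f1)).
  by rhoj_step P e1.
have q2 : (f1 * f2 + p * a2) != 0 by nz_linear (H 1%N erefl).1 e2.
have e3 : ri (iter 1 P s0) =
  mkst (- a1 - a2) a2
    (f1 * (f1 * f2 + p * a2) / (f1 * f2 + p * (- 2 * a1)))
    ((f1 * f2 + p * (- 2 * a1 - a2)) * (f1 * f2 + p * (- 2 * a1)) / (f1 * (f1 * f2 + p * a2)))
    (f1 * ci ^+ 2 * cj * (f1 * f2 + p * a2) / t1)
    (f1 * t2 * ci ^+ 2 * cj * (f1 * f2 + p * (- 2 * a1)) / (t1 ^+ 2))
    ci cj
    (ak - cik * (2 * a1 + a2) - cjk * (2 * a1 + a2))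
    (fk
      + a1 * uik / f1
      + (2 * a1 + a2) * ujk / ((f1 * f2 + p * (- 2 * a1)) / f1)
      + (a1 + a2) * uik / (f1 * (f1 * f2 + p * a2) / (f1 * f2 + p * (- 2 * a1)))).
  by rhoi_step e2.
have q3 : (f1 * f2 + p * (- 2 * a1 - a2)) != 0 by nz_linear (H 1%N erefl).2 e3.
have e4 : iter 2 P s0 =
  mkst (- a1) (- a2)
    (f1 * (f1 * f2 + p * a2) / (f1 * f2 + p * (- 2 * a1 - a2)))
    ((f1 * f2 + p * (- 2 * a1 - a2)) * (f1 * f2 + p * (- 2 * a1)) / (f1 * (f1 * f2 + p * a2)))
    (f1 * ci ^+ 2 * cj * (f1 * f2 + p * a2) / t1)
    (ci ^+ 2 * cj ^+ 2 * (f1 * f2 + p * (- 2 * a1 - a2)) * (f1 * f2 + p * a2) / t2)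
    ci cj
    (ak - cik * (2 * a1 + a2) - cjk * (2 * a1 + 2 * a2))
    (fk
      + a1 * uik / f1
      + (2 * a1 + a2) * ujk / ((f1 * f2 + p * (- 2 * a1)) / f1)
      + (a1 + a2) * uik / (f1 * (f1 * f2 + p * a2) / (f1 * f2 + p * (- 2 * a1)))
      + a2 * ujk / ((f1 * f2 + p * (- 2 * a1 - a2)) * (f1 * f2 + p * (- 2 * a1)) / (f1 * (f1 * f2 + p * a2)))).
  by rhoj_step P e3.
have e5 : ri (iter 2 P s0) =
  mkst a1 (- 2 * a1 - a2)
    (f1 * (f1 * f2 + p * a2) / (f1 * f2 + p * (- 2 * a1 - a2)))
    (f2 * (f1 * f2 + p * (- 2 * a1 - a2)) / (f1 * f2 + p * a2))
    (t1 * ci * cj * (f1 * f2 + p * a2) / t2)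
    (ci ^+ 2 * cj ^+ 2 * (f1 * f2 + p * (- 2 * a1 - a2)) * (f1 * f2 + p * a2) / t2)
    ci cj
    (ak - cik * (a1 + a2) - cjk * (2 * a1 + 2 * a2))
    (fk
      + a1 * uik / f1
      + (2 * a1 + a2) * ujk / ((f1 * f2 + p * (- 2 * a1)) / f1)
      + (a1 + a2) * uik / (f1 * (f1 * f2 + p * a2) / (f1 * f2 + p * (- 2 * a1)))
      + a2 * ujk / ((f1 * f2 + p * (- 2 * a1 - a2)) * (f1 * f2 + p * (- 2 * a1)) / (f1 * (f1 * f2 + p * a2)))
      + (- a1) * uik / (f1 * (f1 * f2 + p * a2) / (f1 * f2 + p * (- 2 * a1 - a2)))).
  by rhoi_step e4.
have e6 : iter 3 P s0 =
  mkst (- a1 - a2) (2 * a1 + a2)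
    ((f1 * f2 + p * a2) / f2)
    (f2 * (f1 * f2 + p * (- 2 * a1 - a2)) / (f1 * f2 + p * a2))
    (t1 * ci * cj * (f1 * f2 + p * a2) / t2)
    (f2 * t1 ^+ 2 * cj / t2)
    ci cj
    (ak - cik * (a1 + a2) - cjk * a2)
    (fk
      + a1 * uik / f1
      + (2 * a1 + a2) * ujk / ((f1 * f2 + p * (- 2 * a1)) / f1)
      + (a1 + a2) * uik / (f1 * (f1 * f2 + p * a2) / (f1 * f2 + p * (- 2 * a1)))
      + a2 * ujk / ((f1 * f2 + p * (- 2 * a1 - a2)) * (f1 * f2 + p * (- 2 * a1)) / (f1 * (f1 * f2 + p * a2)))
      + (- a1) * uik / (f1 * (f1 * f2 + p * a2) / (f1 * f2 + p * (- 2 * a1 - a2)))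
      + (- 2 * a1 - a2) * ujk / (f2 * (f1 * f2 + p * (- 2 * a1 - a2)) / (f1 * f2 + p * a2))).
  by rhoj_step P e5.
have e7 : ri (iter 3 P s0) =
  mkst (a1 + a2) (- a2)
    ((f1 * f2 + p * a2) / f2)
    f2
    t1
    (f2 * t1 ^+ 2 * cj / t2)
    ci cj
    (ak - cjk * a2)
    (fk
      + a1 * uik / f1
      + (2 * a1 + a2) * ujk / ((f1 * f2 + p * (- 2 * a1)) / f1)
      + (a1 + a2) * uik / (f1 * (f1 * f2 + p * a2) / (f1 * f2 + p * (- 2 * a1)))
      + a2 * ujk / ((f1 * f2 + p * (- 2 * a1 - a2)) * (f1 * f2 + p * (- 2 * a1)) / (f1 * (f1 * f2 + p * a2)))
      + (- a1) * uik / (f1 * (f1 * f2 + p * a2) / (f1 * f2 + p * (- 2 * a1 - a2)))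
      + (- 2 * a1 - a2) * ujk / (f2 * (f1 * f2 + p * (- 2 * a1 - a2)) / (f1 * f2 + p * a2))
      + (- a1 - a2) * uik / ((f1 * f2 + p * a2) / f2)).
  by rhoi_step e6.
by rhoj_step P e7.
Qed.

Lemma braid_G2 (F : fieldType) (aij aji p cik cjk uij uik ujk : F) (s0 : state F) :
  aij = - 3 -> aji = - 1 -> uij = - 3 * p ->
  let ri := rhoi aij cik uij uik 1 in
  let rj := rhoj aji cjk p ujk 3 in
  let P s := rj (ri s) in
  (forall N, (N < 6)%N -> nzs (iter N P s0) /\ nzs (ri (iter N P s0))) ->
  iter 6 P s0 = s0.
Proof.
move=> -> -> -> ri rj P; case: s0 => a1 a2 f1 f2 t1 t2 ci cj ak fk H.
have [[nf1 [nf2 [nt1 [nt2 [nci ncj]]]]] _] := H 0%N erefl.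
rewrite /= in nf1 nf2 nt1 nt2 nci ncj; set s0 := mkst a1 a2 f1 f2 t1 t2 ci cj ak fk.
have e1 : ri s0 =
  mkst (- a1) (3 * a1 + a2)
    f1
    ((f1 * f2 + p * (- 3 * a1)) / f1)
    (f1 * t2 * ci / t1)
    t2
    ci cj
    (ak - cik * a1)
    (fk + a1 * uik / f1).
  by unfold_locals; rewrite /rhoi /=; congr mkst; field; solve_nonzero.
have q1 : (f1 * f2 + p * (- 3 * a1)) != 0 by nz_linear (H 0%N erefl).2 e1.
have e2 : iter 1 P s0 =
  mkst (2 * a1 + a2) (- 3 * a1 - a2)
    (f1 * (f1 * f2 + p * a2) / (f1 * f2 + p * (- 3 * a1)))
    ((f1 * f2 + p * (- 3 * a1)) / f1)
    (f1 * t2 * ci / t1)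
    (f1 ^+ 2 * t2 ^+ 2 * ci ^+ 3 * cj * (f1 * f2 + p * (- 3 * a1)) / (t1 ^+ 3))
    ci cj
    (ak - cik * a1 - cjk * (3 * a1 + a2))
    (fk + a1 * uik / f1 + (3 * a1 + a2) * ujk / ((f1 * f2 + p * (- 3 * a1)) / f1)).
  by rhoj_step P e1.
have q2 : (f1 * f2 + p * a2) != 0 by nz_linear (H 1%N erefl).1 e2.
have e3 : ri (iter 1 P s0) =
  mkst (- 2 * a1 - a2) (3 * a1 + 2 * a2)
    (f1 * (f1 * f2 + p * a2) / (f1 * f2 + p * (- 3 * a1)))
    ((f1 * f2 + p * (- 6 * a1 - 2 * a2)) * (f1 * f2 + p * (- 3 * a1))
      / (f1 * (f1 * f2 + p * a2)))
    (f1 ^+ 2 * t2 * ci ^+ 3 * cj * (f1 * f2 + p * a2) / (t1 ^+ 2))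
    (f1 ^+ 2 * t2 ^+ 2 * ci ^+ 3 * cj * (f1 * f2 + p * (- 3 * a1)) / (t1 ^+ 3))
    ci cj
    (ak - cik * (3 * a1 + a2) - cjk * (3 * a1 + a2))
    (fk
      + a1 * uik / f1
      + (3 * a1 + a2) * ujk / ((f1 * f2 + p * (- 3 * a1)) / f1)
      + (2 * a1 + a2) * uik / (f1 * (f1 * f2 + p * a2) / (f1 * f2 + p * (- 3 * a1)))).
  by rhoi_step e2.
have q3 : (f1 * f2 + p * (- 6 * a1 - 2 * a2)) != 0 by nz_linear (H 1%N erefl).2 e3.
have e4 : iter 2 P s0 =
  mkst (a1 + a2) (- 3 * a1 - 2 * a2)
    (f1 * (f1 * f2 + p * a2) / (f1 * f2 + p * (- 6 * a1 - 2 * a2)))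
    ((f1 * f2 + p * (- 6 * a1 - 2 * a2)) * (f1 * f2 + p * (- 3 * a1))
      / (f1 * (f1 * f2 + p * a2)))
    (f1 ^+ 2 * t2 * ci ^+ 3 * cj * (f1 * f2 + p * a2) / (t1 ^+ 2))
    (f1 ^+ 3 * t2 * ci ^+ 6 * cj ^+ 3 * (f1 * f2 + p * (- 6 * a1 - 2 * a2))
      * (f1 * f2 + p * a2) ^+ 2 / (t1 ^+ 3))
    ci cj
    (ak - cik * (3 * a1 + a2) - cjk * (6 * a1 + 3 * a2))
    (fk
      + a1 * uik / f1
      + (3 * a1 + a2) * ujk / ((f1 * f2 + p * (- 3 * a1)) / f1)
      + (2 * a1 + a2) * uik / (f1 * (f1 * f2 + p * a2) / (f1 * f2 + p * (- 3 * a1)))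
      + (3 * a1 + 2 * a2) * ujk / ((f1 * f2 + p * (- 6 * a1 - 2 * a2)) * (f1 * f2 + p * (- 3 * a1)) / (f1 * (f1 * f2 + p * a2)))).
  by rhoj_step P e3.
have e5 : ri (iter 2 P s0) =
  mkst (- a1 - a2) a2
    (f1 * (f1 * f2 + p * a2) / (f1 * f2 + p * (- 6 * a1 - 2 * a2)))
    ((f1 * f2 + p * (- 6 * a1 - 3 * a2)) * (f1 * f2 + p * (- 6 * a1 - 2 * a2))
      / (f1 * (f1 * f2 + p * a2)))
    (f1 ^+ 2 * ci ^+ 4 * cj ^+ 2 * (f1 * f2 + p * a2) ^+ 2 / t1)
    (f1 ^+ 3 * t2 * ci ^+ 6 * cj ^+ 3 * (f1 * f2 + p * (- 6 * a1 - 2 * a2))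
      * (f1 * f2 + p * a2) ^+ 2 / (t1 ^+ 3))
    ci cj
    (ak - cik * (4 * a1 + 2 * a2) - cjk * (6 * a1 + 3 * a2))
    (fk
      + a1 * uik / f1
      + (3 * a1 + a2) * ujk / ((f1 * f2 + p * (- 3 * a1)) / f1)
      + (2 * a1 + a2) * uik / (f1 * (f1 * f2 + p * a2) / (f1 * f2 + p * (- 3 * a1)))
      + (3 * a1 + 2 * a2) * ujk / ((f1 * f2 + p * (- 6 * a1 - 2 * a2)) * (f1 * f2 + p * (- 3 * a1)) / (f1 * (f1 * f2 + p * a2)))
      + (a1 + a2) * uik / (f1 * (f1 * f2 + p * a2) / (f1 * f2 + p * (- 6 * a1 - 2 * a2)))).
  by rhoi_step e4.
have q4 : (f1 * f2 + p * (- 6 * a1 - 3 * a2)) != 0 by nz_linear (H 2%N erefl).2 e5.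
have e6 : iter 3 P s0 =
  mkst (- a1) (- a2)
    (f1 * (f1 * f2 + p * a2) / (f1 * f2 + p * (- 6 * a1 - 3 * a2)))
    ((f1 * f2 + p * (- 6 * a1 - 3 * a2)) * (f1 * f2 + p * (- 6 * a1 - 2 * a2))
      / (f1 * (f1 * f2 + p * a2)))
    (f1 ^+ 2 * ci ^+ 4 * cj ^+ 2 * (f1 * f2 + p * a2) ^+ 2 / t1)
    (f1 ^+ 2 * ci ^+ 6 * cj ^+ 4 * (f1 * f2 + p * (- 6 * a1 - 3 * a2)) * (f1 * f2 + p * a2) ^+ 3
      / t2)
    ci cj
    (ak - cik * (4 * a1 + 2 * a2) - cjk * (6 * a1 + 4 * a2))
    (fk
      + a1 * uik / f1
      + (3 * a1 + a2) * ujk / ((f1 * f2 + p * (- 3 * a1)) / f1)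
      + (2 * a1 + a2) * uik / (f1 * (f1 * f2 + p * a2) / (f1 * f2 + p * (- 3 * a1)))
      + (3 * a1 + 2 * a2) * ujk / ((f1 * f2 + p * (- 6 * a1 - 2 * a2)) * (f1 * f2 + p * (- 3 * a1)) / (f1 * (f1 * f2 + p * a2)))
      + (a1 + a2) * uik / (f1 * (f1 * f2 + p * a2) / (f1 * f2 + p * (- 6 * a1 - 2 * a2)))
      + a2 * ujk / ((f1 * f2 + p * (- 6 * a1 - 3 * a2)) * (f1 * f2 + p * (- 6 * a1 - 2 * a2)) / (f1 * (f1 * f2 + p * a2)))).
  by rhoj_step P e5.
have e7 : ri (iter 3 P s0) =
  mkst a1 (- 3 * a1 - a2)
    (f1 * (f1 * f2 + p * a2) / (f1 * f2 + p * (- 6 * a1 - 3 * a2)))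
    ((f1 * f2 + p * (- 6 * a1 - 3 * a2)) * (f1 * f2 + p * (- 3 * a1 - 2 * a2))
      / (f1 * (f1 * f2 + p * a2)))
    (f1 * t1 * ci ^+ 3 * cj ^+ 2 * (f1 * f2 + p * a2) ^+ 2 / t2)
    (f1 ^+ 2 * ci ^+ 6 * cj ^+ 4 * (f1 * f2 + p * (- 6 * a1 - 3 * a2)) * (f1 * f2 + p * a2) ^+ 3
      / t2)
    ci cj
    (ak - cik * (3 * a1 + 2 * a2) - cjk * (6 * a1 + 4 * a2))
    (fk
      + a1 * uik / f1
      + (3 * a1 + a2) * ujk / ((f1 * f2 + p * (- 3 * a1)) / f1)
      + (2 * a1 + a2) * uik / (f1 * (f1 * f2 + p * a2) / (f1 * f2 + p * (- 3 * a1)))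
      + (3 * a1 + 2 * a2) * ujk / ((f1 * f2 + p * (- 6 * a1 - 2 * a2)) * (f1 * f2 + p * (- 3 * a1)) / (f1 * (f1 * f2 + p * a2)))
      + (a1 + a2) * uik / (f1 * (f1 * f2 + p * a2) / (f1 * f2 + p * (- 6 * a1 - 2 * a2)))
      + a2 * ujk / ((f1 * f2 + p * (- 6 * a1 - 3 * a2)) * (f1 * f2 + p * (- 6 * a1 - 2 * a2)) / (f1 * (f1 * f2 + p * a2)))
      + (- a1) * uik / (f1 * (f1 * f2 + p * a2) / (f1 * f2 + p * (- 6 * a1 - 3 * a2)))).
  by rhoi_step e6.
have q5 : (f1 * f2 + p * (- 3 * a1 - 2 * a2)) != 0 by nz_linear (H 3%N erefl).2 e7.
have e8 : iter 4 P s0 =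
  mkst (- 2 * a1 - a2) (3 * a1 + a2)
    (f1 * (f1 * f2 + p * a2) / (f1 * f2 + p * (- 3 * a1 - 2 * a2)))
    ((f1 * f2 + p * (- 6 * a1 - 3 * a2)) * (f1 * f2 + p * (- 3 * a1 - 2 * a2))
      / (f1 * (f1 * f2 + p * a2)))
    (f1 * t1 * ci ^+ 3 * cj ^+ 2 * (f1 * f2 + p * a2) ^+ 2 / t2)
    (t1 ^+ 3 * ci ^+ 3 * cj ^+ 3 * (f1 * f2 + p * (- 3 * a1 - 2 * a2)) * (f1 * f2 + p * a2) ^+ 2
      / (t2 ^+ 2))
    ci cj
    (ak - cik * (3 * a1 + 2 * a2) - cjk * (3 * a1 + 3 * a2))
    (fk
      + a1 * uik / f1
      + (3 * a1 + a2) * ujk / ((f1 * f2 + p * (- 3 * a1)) / f1)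
      + (2 * a1 + a2) * uik / (f1 * (f1 * f2 + p * a2) / (f1 * f2 + p * (- 3 * a1)))
      + (3 * a1 + 2 * a2) * ujk / ((f1 * f2 + p * (- 6 * a1 - 2 * a2)) * (f1 * f2 + p * (- 3 * a1)) / (f1 * (f1 * f2 + p * a2)))
      + (a1 + a2) * uik / (f1 * (f1 * f2 + p * a2) / (f1 * f2 + p * (- 6 * a1 - 2 * a2)))
      + a2 * ujk / ((f1 * f2 + p * (- 6 * a1 - 3 * a2)) * (f1 * f2 + p * (- 6 * a1 - 2 * a2)) / (f1 * (f1 * f2 + p * a2)))
      + (- a1) * uik / (f1 * (f1 * f2 + p * a2) / (f1 * f2 + p * (- 6 * a1 - 3 * a2)))
      + (- 3 * a1 - a2) * ujk / ((f1 * f2 + p * (- 6 * a1 - 3 * a2)) * (f1 * f2 + p * (- 3 * a1 - 2 * a2)) / (f1 * (f1 * f2 + p * a2)))).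
  by rhoj_step P e7.
have e9 : ri (iter 4 P s0) =
  mkst (2 * a1 + a2) (- 3 * a1 - 2 * a2)
    (f1 * (f1 * f2 + p * a2) / (f1 * f2 + p * (- 3 * a1 - 2 * a2)))
    (f2 * (f1 * f2 + p * (- 3 * a1 - 2 * a2)) / (f1 * f2 + p * a2))
    (t1 ^+ 2 * ci * cj * (f1 * f2 + p * a2) / t2)
    (t1 ^+ 3 * ci ^+ 3 * cj ^+ 3 * (f1 * f2 + p * (- 3 * a1 - 2 * a2)) * (f1 * f2 + p * a2) ^+ 2
      / (t2 ^+ 2))
    ci cj
    (ak - cik * (a1 + a2) - cjk * (3 * a1 + 3 * a2))
    (fk
      + a1 * uik / f1
      + (3 * a1 + a2) * ujk / ((f1 * f2 + p * (- 3 * a1)) / f1)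
      + (2 * a1 + a2) * uik / (f1 * (f1 * f2 + p * a2) / (f1 * f2 + p * (- 3 * a1)))
      + (3 * a1 + 2 * a2) * ujk / ((f1 * f2 + p * (- 6 * a1 - 2 * a2)) * (f1 * f2 + p * (- 3 * a1)) / (f1 * (f1 * f2 + p * a2)))
      + (a1 + a2) * uik / (f1 * (f1 * f2 + p * a2) / (f1 * f2 + p * (- 6 * a1 - 2 * a2)))
      + a2 * ujk / ((f1 * f2 + p * (- 6 * a1 - 3 * a2)) * (f1 * f2 + p * (- 6 * a1 - 2 * a2)) / (f1 * (f1 * f2 + p * a2)))
      + (- a1) * uik / (f1 * (f1 * f2 + p * a2) / (f1 * f2 + p * (- 6 * a1 - 3 * a2)))
      + (- 3 * a1 - a2) * ujk / ((f1 * f2 + p * (- 6 * a1 - 3 * a2)) * (f1 * f2 + p * (- 3 * a1 - 2 * a2)) / (f1 * (f1 * f2 + p * a2)))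
      + (- 2 * a1 - a2) * uik / (f1 * (f1 * f2 + p * a2) / (f1 * f2 + p * (- 3 * a1 - 2 * a2)))).
  by rhoi_step e8.
have e10 : iter 5 P s0 =
  mkst (- a1 - a2) (3 * a1 + 2 * a2)
    ((f1 * f2 + p * a2) / f2)
    (f2 * (f1 * f2 + p * (- 3 * a1 - 2 * a2)) / (f1 * f2 + p * a2))
    (t1 ^+ 2 * ci * cj * (f1 * f2 + p * a2) / t2)
    (f2 * t1 ^+ 3 * cj / t2)
    ci cj
    (ak - cik * (a1 + a2) - cjk * a2)
    (fk
      + a1 * uik / f1
      + (3 * a1 + a2) * ujk / ((f1 * f2 + p * (- 3 * a1)) / f1)
      + (2 * a1 + a2) * uik / (f1 * (f1 * f2 + p * a2) / (f1 * f2 + p * (- 3 * a1)))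
      + (3 * a1 + 2 * a2) * ujk / ((f1 * f2 + p * (- 6 * a1 - 2 * a2)) * (f1 * f2 + p * (- 3 * a1)) / (f1 * (f1 * f2 + p * a2)))
      + (a1 + a2) * uik / (f1 * (f1 * f2 + p * a2) / (f1 * f2 + p * (- 6 * a1 - 2 * a2)))
      + a2 * ujk / ((f1 * f2 + p * (- 6 * a1 - 3 * a2)) * (f1 * f2 + p * (- 6 * a1 - 2 * a2)) / (f1 * (f1 * f2 + p * a2)))
      + (- a1) * uik / (f1 * (f1 * f2 + p * a2) / (f1 * f2 + p * (- 6 * a1 - 3 * a2)))
      + (- 3 * a1 - a2) * ujk / ((f1 * f2 + p * (- 6 * a1 - 3 * a2)) * (f1 * f2 + p * (- 3 * a1 - 2 * a2)) / (f1 * (f1 * f2 + p * a2)))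
      + (- 2 * a1 - a2) * uik / (f1 * (f1 * f2 + p * a2) / (f1 * f2 + p * (- 3 * a1 - 2 * a2)))
      + (- 3 * a1 - 2 * a2) * ujk / (f2 * (f1 * f2 + p * (- 3 * a1 - 2 * a2)) / (f1 * f2 + p * a2))).
  by rhoj_step P e9.
have e11 : ri (iter 5 P s0) =
  mkst (a1 + a2) (- a2)
    ((f1 * f2 + p * a2) / f2)
    f2
    t1
    (f2 * t1 ^+ 3 * cj / t2)
    ci cj
    (ak - cjk * a2)
    (fk
      + a1 * uik / f1
      + (3 * a1 + a2) * ujk / ((f1 * f2 + p * (- 3 * a1)) / f1)
      + (2 * a1 + a2) * uik / (f1 * (f1 * f2 + p * a2) / (f1 * f2 + p * (- 3 * a1)))
      + (3 * a1 + 2 * a2) * ujk / ((f1 * f2 + p * (- 6 * a1 - 2 * a2)) * (f1 * f2 + p * (- 3 * a1)) / (f1 * (f1 * f2 + p * a2)))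
      + (a1 + a2) * uik / (f1 * (f1 * f2 + p * a2) / (f1 * f2 + p * (- 6 * a1 - 2 * a2)))
      + a2 * ujk / ((f1 * f2 + p * (- 6 * a1 - 3 * a2)) * (f1 * f2 + p * (- 6 * a1 - 2 * a2)) / (f1 * (f1 * f2 + p * a2)))
      + (- a1) * uik / (f1 * (f1 * f2 + p * a2) / (f1 * f2 + p * (- 6 * a1 - 3 * a2)))
      + (- 3 * a1 - a2) * ujk / ((f1 * f2 + p * (- 6 * a1 - 3 * a2)) * (f1 * f2 + p * (- 3 * a1 - 2 * a2)) / (f1 * (f1 * f2 + p * a2)))
      + (- 2 * a1 - a2) * uik / (f1 * (f1 * f2 + p * a2) / (f1 * f2 + p * (- 3 * a1 - 2 * a2)))
      + (- 3 * a1 - 2 * a2) * ujk / (f2 * (f1 * f2 + p * (- 3 * a1 - 2 * a2)) / (f1 * f2 + p * a2))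
      + (- a1 - a2) * uik / ((f1 * f2 + p * a2) / f2)).
  by rhoi_step e10.
by rhoj_step P e11.
Qed.

(** * Reduction of the braid relations to rank two *)

Definition rank2_state n (A : 'M[int]_n) (i j k : 'I_n) (Y : 'I_(n + n + n) -> FF n) :=
  mkst (Y (valpha i)) (Y (valpha j)) (Y (vf i)) (Y (vf j)) (Y (vtau i)) (Y (vtau j))
    (\prod_(l < n | (l != i) && (l != j)) Y (vtau l) ^+ `|A l i|%N)
    (\prod_(l < n | (l != j) && (l != i)) Y (vtau l) ^+ `|A l j|%N)
    (Y (valpha k)) (Y (vf k)).

Section RankTwo.
Variables (n : nat) (A : 'M[int]_n) (U : 'M[CC]_n).
Hypothesis A_diag : forall i, A i i = 2.
Hypothesis A_offdiag : forall i j, i != j -> A i j <= 0.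
Hypothesis U_diag : forall i, U i i = 0.
Local Notation FFn := (FF n).
Local Notation X := (@Xvar n).
Local Notation s := (s_act A U).
Implicit Types (i j k : 'I_n) (Y : 'I_(n + n + n) -> FFn).

Definition rank2_step i j k (st : state FFn) :=
  rhoj (A j i)%:~R (A j k)%:~R (cst n (U j i)) (cst n (U j k)) `|A i j|%N
    (rhoi (A i j)%:~R (A i k)%:~R (cst n (U i j)) (cst n (U i k)) `|A j i|%N st).

Lemma eq_rank2_state i j k Y1 Y2 : Y1 =1 Y2 -> rank2_state A i j k Y1 = rank2_state A i j k Y2.
Proof.
by move=> e; rewrite /rank2_state !e; congr mkst; apply: eq_bigr => l _; rewrite e.
Qed.

Lemma rank2_state_s_gen i j k Y : i != j ->
  rank2_state A i j k (s_gen A U i Y) =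
  rhoi (A i j)%:~R (A i k)%:~R (cst n (U i j)) (cst n (U i k)) `|A j i|%N (rank2_state A i j k Y).
Proof.
move=> ij; rewrite /rank2_state /rhoi; congr mkst.
- by rewrite s_gen_alpha A_diag; ring.
- by rewrite s_gen_alpha.
- by rewrite s_gen_f_self.
- by rewrite s_gen_f mulrAC.
- by rewrite s_gen_tau_self // /tau_rest (bigD1 j) 1?eq_sym.
- by rewrite s_gen_tau_other // eq_sym.
- by apply: eq_bigr => l /andP [li _]; rewrite s_gen_tau_other.
- by apply: eq_bigr => l /andP [_ li]; rewrite s_gen_tau_other.
- by rewrite s_gen_alpha.
- by rewrite s_gen_f mulrAC.
Qed.

Lemma rank2_state_s_gen_swap i j k Y : i != j ->
  rank2_state A i j k (s_gen A U j Y) =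
  rhoj (A j i)%:~R (A j k)%:~R (cst n (U j i)) (cst n (U j k)) `|A i j|%N (rank2_state A i j k Y).
Proof.
by move=> ij; rewrite -[LHS]/(swap (rank2_state A j i k _)) rank2_state_s_gen 1?eq_sym.
Qed.

Lemma nzs_rank2_state i j k s' : cmorph s' -> nzs (rank2_state A i j k (s' \o X)).
Proof.
move=> hs; have sX0 v : s' (X v) != 0 by apply: cmorph_neq0; rewrite ?Xvar_neq0.
by do ! split => //=; apply/prodf_neq0 => l _; rewrite expf_neq0.
Qed.

Variables (i j : 'I_n).
Hypothesis ij : i != j.

Local Notation T := (fun x => s i (s j x)).
Let cmorph_si := cmorph_s A_diag A_offdiag U_diag.
Let s_Xvar := s_act_Xvar A_diag A_offdiag U_diag.

Lemma cmorph_braid m : cmorph (iter m T).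
Proof. exact/cmorph_iter/(cmorph_comp (cmorph_si i) (cmorph_si j)). Qed.

Lemma iter_braid_Xvar m v :
  iter m.+1 T (X v) = s_gen A U j (s_gen A U i (fun w => iter m T (X w))) v.
Proof.
rewrite iterSr /= s_Xvar (cmorph_s_gen A U (cmorph_si i)) (cmorph_s_gen A U (cmorph_braid m)).
by apply: eq_s_gen => w /=; rewrite s_Xvar (cmorph_s_gen A U (cmorph_braid m)).
Qed.

Lemma rank2_state_braid k m :
  rank2_state A i j k (fun v => iter m T (X v)) = iter m (rank2_step i j k) (rank2_state A i j k X).
Proof.
elim: m => // m ih; rewrite iterS -ih -[rank2_step _ _ _ _]/(rhoj _ _ _ _ _ (rhoi _ _ _ _ _ _)).
by rewrite -rank2_state_s_gen // -rank2_state_s_gen_swap //; apply: eq_rank2_state => v; rewrite iter_braid_Xvar.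
Qed.

Lemma nzs_braid k m : let st := iter m (rank2_step i j k) (rank2_state A i j k X) in
  nzs st /\ nzs (rhoi (A i j)%:~R (A i k)%:~R (cst n (U i j)) (cst n (U i k)) `|A j i|%N st).
Proof.
rewrite /= -rank2_state_braid -rank2_state_s_gen //; split; first exact: (nzs_rank2_state _ _ _ (cmorph_braid m)).
rewrite (@eq_rank2_state _ _ _ _ ((iter m T \o s i) \o X)); last first.
  by move=> v /=; rewrite s_Xvar (cmorph_s_gen A U (cmorph_braid m)).
exact/nzs_rank2_state/(cmorph_comp (cmorph_braid m) (cmorph_si i)).
Qed.

Lemma iter_braid_tau_other l m : l != i -> l != j -> iter m T (X (vtau l)) = X (vtau l).
Proof.
move=> li lj; elim: m => // m ih.
by rewrite iter_braid_Xvar s_gen_tau_other // s_gen_tau_other.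
Qed.

Lemma braid_of_rank2 m :
  (forall k, iter m (rank2_step i j k) (rank2_state A i j k X) = rank2_state A i j k X) ->
  forall x, iter m T x = x.
Proof.
move=> H; apply: (cmorph_ext (cmorph_braid m) (cmorph_id n)) => v.
have e k : rank2_state A i j k (fun v => iter m T (X v)) = rank2_state A i j k X.
  by rewrite rank2_state_braid H.
elim/var_ind: v => l.
- exact: (congr1 (@st_ak _) (e l)).
- exact: (congr1 (@st_fk _) (e l)).
- have [->|li] := eqVneq l i; first exact: (congr1 (@st_t1 _) (e i)).
  have [->|lj] := eqVneq l j; first exact: (congr1 (@st_t2 _) (e i)).
  exact: iter_braid_tau_other.
Qed.
End RankTwo.

Lemma iter_comp_swap (T : Type) (f g : T -> T) m : involutive f ->
  (forall x, iter m (fun y => g (f y)) x = x) -> forall x, iter m (fun y => f (g y)) x = x.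
Proof.
move=> fK h x.
have e y : iter m (fun y => f (g y)) (f y) = f (iter m (fun y => g (f y)) y).
  by elim: m {h} => //= m ->.
by rewrite -[x in LHS]fK e h fK.
Qed.

Lemma cox_m_cases (a b : int) m : a <= 0 -> b <= 0 -> a <= b -> (b = 0 -> a = 0) ->
  cox_m (a * b) = Some m ->
  [\/ [/\ a = 0, b = 0 & m = 2%N], [/\ a = -1, b = -1 & m = 3%N],
      [/\ a = -2, b = -1 & m = 4%N] | [/\ a = -3, b = -1 & m = 6%N]].
Proof.
rewrite /cox_m => a0 b0 ab ba.
case: ifP => [/eqP h [<-]|_].
  have bz : b = 0 by nia.
  by apply: Or41; rewrite bz ba.
case: ifP => [/eqP h [<-]|_]; first by apply: Or42; split; nia.
case: ifP => [/eqP h [<-]|_]; first by apply: Or43; split; nia.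
by case: ifP => [/eqP h [<-]|//]; apply: Or44; split; nia.
Qed.

Lemma cst_scale n (u v : CC) (k : int) : u = - k%:~R * v -> cst n u = - k%:~R * cst n v.
Proof. by move=> ->; rewrite -[cst n _]/(cstC n _) rmorphM rmorphN rmorph_int. Qed.

Section Coxeter.
Variables (n : nat) (A : 'M[int]_n) (U : 'M[CC]_n).
Hypothesis A_diag : forall i, A i i = 2.
Hypothesis A_offdiag : forall i j, i != j -> A i j <= 0.
Hypothesis A_zero : forall i j, A i j = 0 <-> A j i = 0.
Hypothesis U_diag : forall i, U i i = 0.
Hypothesis U_zero : forall i j, A i j = 0 -> A j i = 0 -> U i j = 0 /\ U j i = 0.
Hypothesis U_scale : forall (i j : 'I_n) (k : int), k \in [:: 1; 2; 3] ->
  A i j = - k -> A j i = -1 -> U i j = - k%:~R * U j i.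
Local Notation s := (s_act A U).

Lemma braid_rel_le i j m : i != j -> cox_m (A i j * A j i) = Some m -> A i j <= A j i ->
  forall x, iter m (fun y => s i (s j y)) x = x.
Proof.
move=> ij hm ab; apply: braid_of_rank2 => // k.
move: (nzs_braid A_diag A_offdiag U_diag ij k); rewrite /rank2_step.
have ji : j != i by rewrite eq_sym.
have [[a b ->]|[a b ->]|[a b ->]|[a b ->]] :=
  cox_m_cases (A_offdiag ij) (A_offdiag ji) ab (proj1 (A_zero j i)) hm.
- have [uij uji] := U_zero a b; rewrite a b uij uji cst0 => H.
  exact: (braid_A1xA1 _ _ _ _ (fun N _ => H N)).
- have uij : cst n (U i j) = - cst n (U j i).
    by rewrite (cst_scale n (U_scale (k := 1) erefl a b)) mulN1r.
  rewrite a b => H; exact: (braid_A2 _ _ uij (fun N _ => H N)).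
- rewrite a b => H.
  exact: (braid_B2 _ _ (cst_scale n (U_scale (k := 2) erefl a b)) (fun N _ => H N)).
- rewrite a b => H.
  exact: (braid_G2 _ _ (cst_scale n (U_scale (k := 3) erefl a b)) (fun N _ => H N)).
Qed.
End Coxeter.

Theorem theorem2 (n : nat) (A : 'M[int]_n) (U : 'M[CC]_n) :
  is_GCM A ->
  (forall j, U j j = 0) ->
  (forall i j, A i j = 0 -> A j i = 0 -> U i j = 0 /\ U j i = 0) ->
  (forall (i j : 'I_n) (k : int), k \in [:: 1; 2; 3] ->
      A i j = - k -> A j i = -1 -> U i j = - k%:~R * U j i) ->
  (forall i, (forall c : CC, s_act A U i (cst n c) = cst n c) /\
             s_act A U i 1 = 1 /\
             (forall x y, s_act A U i (x + y) = s_act A U i x + s_act A U i y) /\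
             (forall x y, s_act A U i (x * y) = s_act A U i x * s_act A U i y)) /\
  (forall i (x : FF n), s_act A U i (s_act A U i x) = x) /\
  (forall i j, i != j -> forall m : nat, cox_m (A i j * A j i) = Some m ->
     forall x : FF n, iter m (fun y => s_act A U i (s_act A U j y)) x = x).
Proof.
move=> [A_diag [A_offdiag A_zero]] U_diag U_zero U_scale.
split=> [i|]; first by have [[_ hD] [h1 hM] hC] := cmorph_s A_diag A_offdiag U_diag i.
split=> [i|i j ij m hm]; first exact: s_actK.
have [ab|ba] := lerP (A i j) (A j i).
  exact: (braid_rel_le A_diag A_offdiag A_zero U_diag U_zero U_scale).
apply: iter_comp_swap; first exact: s_actK.
apply: (braid_rel_le A_diag A_offdiag A_zero U_diag U_zero U_scale); rewrite 1?eq_sym //.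
  by rewrite mulrC.
exact: ltW.
Qed.
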